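(* In the transactional panorama model with the lenses and metrics described in the context, for any $k\ge 0$: $S(k\text{-LCMB}) \le S(k\text{-LCNB}) \le S(k\text{-GCNB})$ and $I(k\text{-LCMB}) \ge I(k\text{-LCNB}) \ge I(k\text{-GCNB})$.
   Context: A view graph is a DAG on a set $N$ of nodes (source data and views). Write transactions are processed one at a time; write transaction $w^{t_i}$ creates version $G^{t_i}$ with state set $V^{t_i}$ containing, for each node $n_k$, either its computed new result $v_k^{t_i}$, a placeholder $UC_k^{t_i}$ if $w^{t_i}$ updates $n_k$ but has not yet computed it, or its result from the previous version if $n_k$ is not updated. A version is committed once all its new results are computed; at any time there is the committed graph (most recently committed version, no UCs) and the latest graph (version of the most recent write transaction). Read transactions $r^{s_1},\dots,r^{s_m}$ each read the views in the current viewport and return immediately a set $H^{s_i}$ of states (results or UCs); $Time(r^{s_i})$ is its return time. A returned state's timestamp is that of its version. Lenses: $k$-GCNB reads the latest graph if it has at most $k$ UCs in total, otherwise the committed graph. $k$-LCNB reads the more recent of the committed and latest graphs having at most $k$ UCs for the viewport. $k$-LCMB: if reading either the committed or the latest graph preserves monotonicity (no view gets a state with smaller timestamp than previously read), behave like $k$-LCNB; otherwise read the latest graph. Metrics for $R=\{r^{s_1},\dots,r^{s_m}\}$: invisibility $I(R)=\sum_{i=1}^{m-1}|H^{s_i}_{UC}|\,(Time(r^{s_{i+1}})-Time(r^{s_i}))$ where $H^{s_i}_{UC}$ is the set of UCs in $H^{s_i}$; staleness $S(R)=\sum_{i=1}^{m-1}\sum_{v_k^{t_j}\in H^{s_i}_{qr}}\mathbf{1}[v_k^{t_j}\notin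 V^{t_i}]\,(Time(r^{s_{i+1}})-Time(r^{s_i}))$ where $H^{s_i}_{qr}$ is the set of view results in $H^{s_i}$ and $G^{t_i}$ is the latest version before $r^{s_i}$ starts. $S(A)$, $I(A)$ denote these metrics under lens $A$; lenses are compared on the same write transactions, the same order of computing new view results, and the same sequence of read transactions. *)

From mathcomp Require Import all_boot all_order all_algebra.
Set Implicit Arguments. Unset Strict Implicit. Unset Printing Implicit Defensive.
Import Order.TTheory GRing.Theory Num.Theory.

(* A scenario: nodes of type N (source data and views), times in R.
   - Write transactions are numbered 1..nw (version 0 = initial graph);
     write i arrives at time wtime i and updates the nodes in upd i;
     the new result of node x in version i is computed at time ctime i x
     (only meaningful for x \in upd i).  This fixes the order of computing
     new view results.
   - Read transactions are numbered 0..nr-1; read n starts (and returns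
     immediately) at time rtime n and reads the current viewport
     viewport n. *)
Record scenario (N : finType) (R : realFieldType) := Scenario {
  nw : nat;
  wtime : nat -> R;
  upd : nat -> {set N};
  ctime : nat -> N -> R;
  nr : nat;
  rtime : nat -> R;
  viewport : nat -> {set N}
}.

Section Model.
Variables (N : finType) (R : realFieldType) (sc : scenario N R).
Local Open Scope ring_scope.

(* In version i the state of node x is the one produced by the most recent
   write j <= i updating x (j = 0: initial, always computed); its timestamp
   is j.  It is the result v_x^{t_j} if already computed, else UC_x^{t_j}. *)
Definition lastupd (i : nat) (x : N) : nat :=
  \max_(1 <= j < i.+1 | x \in upd sc j) j.

Definition computed (tau : R) (j : nat) (x : N) : bool :=
  (j == 0)%N || (ctime sc j x < tau).

Definition is_UC (tau : R) (i : nat) (x : N) : bool :=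
  ~~ computed tau (lastupd i x) x.

Definition numUC (tau : R) (i : nat) (A : {set N}) : nat :=
  #|[set x in A | is_UC tau i x]|.

Definition latest (tau : R) : nat :=
  \max_(1 <= i < (nw sc).+1 | wtime sc i < tau) i.

Definition committed (tau : R) : nat :=
  \max_(0 <= i < (latest tau).+1 | numUC tau i setT == 0%N) i.

(* the state of x read from version i at time tau is a result
   v_x^{t_j} (j = lastupd i x) that does not belong to the state set of
   the latest version *)
Definition stale_result (tau : R) (i : nat) (x : N) : bool :=
  computed tau (lastupd i x) x && (lastupd (latest tau) x != lastupd i x).

(* A lens is given by the version it reads at each read transaction n. *)
Definition gcnb (k : nat) (n : nat) : nat :=
  let tau := rtime sc n in
  if (numUC tau (latest tau) setT <= k)%N then latest tau else committed tau.

Definition lcnb (k : nat) (n : nat) : nat :=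
  let tau := rtime sc n in
  if (numUC tau (latest tau) (viewport sc n) <= k)%N then latest tau
  else committed tau.

Definition mono_ok (h : seq nat) (n : nat) (v : nat) : bool :=
  [forall x, (x \in viewport sc n) ==>
     all (fun p => (x \notin viewport sc p) ||
                   (lastupd (nth 0%N h p) x <= lastupd v x)%N)
         (iota 0 (size h))].

(* versions read by k-LCMB at reads 0..n-1 *)
Fixpoint lcmb_hist (k : nat) (n : nat) : seq nat :=
  match n with
  | 0 => [::]
  | n'.+1 =>
      let h := lcmb_hist k n' in
      let tau := rtime sc n' in
      rcons h (if mono_ok h n' (committed tau) && mono_ok h n' (latest tau)
               then lcnb k n' else latest tau)
  end.

Definition lcmb (k : nat) (n : nat) : nat := nth 0%N (lcmb_hist k n.+1) n.

Definition invisibility (lens : nat -> nat) : R :=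
  \sum_(i < (nr sc).-1)
     (numUC (rtime sc i) (lens i) (viewport sc i))%:R
       * (rtime sc i.+1 - rtime sc i).

Definition staleness (lens : nat -> nat) : R :=
  \sum_(i < (nr sc).-1)
     (#|[set x in viewport sc i | stale_result (rtime sc i) (lens i) x]|)%:R
       * (rtime sc i.+1 - rtime sc i).

End Model.

(* Every lens reads, at each read transaction, either the latest or the
   committed graph.  The latest graph never exposes a stale result and the
   committed graph never exposes a UC, so each comparison holds read by read:
   whenever k-GCNB reads the latest graph, so does k-LCNB (a global bound of k
   UCs bounds the UCs of the viewport), and k-LCMB deviates from k-LCNB only
   by reading the latest graph.  Summing with the nonnegative weights
   Time(r^{s_{i+1}}) - Time(r^{s_i}) gives the inequalities. *)
From mathcomp Require Import all_boot all_order all_algebra.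
Set Implicit Arguments. Unset Strict Implicit. Unset Printing Implicit Defensive.
Import Order.TTheory GRing.Theory Num.Theory.
Local Open Scope ring_scope.

Lemma ler_weighted_sum (R : numDomainType) (m : nat) (t : nat -> R)
    (f g : nat -> nat) :
  (forall i, (i.+1 < m)%N -> t i <= t i.+1) ->
  (forall i, (i.+1 < m)%N -> (f i <= g i)%N) ->
  \sum_(i < m.-1) (f i)%:R * (t i.+1 - t i)
    <= \sum_(i < m.-1) (g i)%:R * (t i.+1 - t i).
Proof.
move=> t_incr f_le_g; apply: ler_sum => -[i /= lt_i_m] _.
rewrite ltn_predRL in lt_i_m.
by rewrite ler_wpM2r ?subr_ge0 ?t_incr // ler_nat f_le_g.
Qed.

Section Panorama.
Variables (N : finType) (R : realFieldType) (sc : scenario N R).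

Lemma numUCS tau v (A B : {set N}) :
  A \subset B -> (numUC sc tau v A <= numUC sc tau v B)%N.
Proof.
move=> /subsetP sAB; apply/subset_leq_card/subsetP => x.
by rewrite !inE => /andP[/sAB -> ->].
Qed.

Lemma numUC_initial tau A : numUC sc tau 0 A = 0%N.
Proof.
apply/eqP; rewrite cards_eq0; apply/eqP/setP => x.
by rewrite !inE /is_UC /lastupd big_geq ?andbF.
Qed.

Lemma numUC_committed tau A : numUC sc tau (committed sc tau) A = 0%N.
Proof.
apply/eqP; rewrite -leqn0 (leq_trans (numUCS tau _ (subsetT A))) // leqn0.
apply: (big_ind (fun v => numUC sc tau v setT == 0%N)) => //.
- by rewrite numUC_initial.
- by move=> v w v0 w0; rewrite /maxn; case: ifP.
Qed.

Definition stale_count (n v : nat) : nat :=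
  #|[set x in viewport sc n | stale_result sc (rtime sc n) v x]|.

Definition UC_count (n v : nat) : nat :=
  numUC sc (rtime sc n) v (viewport sc n).

Lemma stale_count_latest n : stale_count n (latest sc (rtime sc n)) = 0%N.
Proof.
apply/eqP; rewrite cards_eq0; apply/eqP/setP => x.
by rewrite !inE /stale_result eqxx !andbF.
Qed.

Lemma UC_count_committed n : UC_count n (committed sc (rtime sc n)) = 0%N.
Proof. exact: numUC_committed. Qed.

Variable k : nat.

Lemma lcnb_latest_or_committed n :
  lcnb sc k n = latest sc (rtime sc n) \/ lcnb sc k n = committed sc (rtime sc n).
Proof. by rewrite /lcnb; case: ifP; [left | right]. Qed.

Lemma gcnb_lcnb n :
  gcnb sc k n = lcnb sc k n \/
  gcnb sc k n = committed sc (rtime sc n) /\ lcnb sc k n = latest sc (rtime sc n).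
Proof.
rewrite /gcnb /lcnb; case: ifP => [all_le_k | _]; last by case: ifP; auto.
by rewrite (leq_trans (numUCS _ _ (subsetT _)) all_le_k); left.
Qed.

Lemma size_lcmb_hist n : size (lcmb_hist sc k n) = n.
Proof. by elim: n => //= n IHn; rewrite size_rcons IHn. Qed.

Lemma lcmb_lcnb_or_latest n :
  lcmb sc k n = lcnb sc k n \/ lcmb sc k n = latest sc (rtime sc n).
Proof.
rewrite /lcmb /= nth_rcons size_lcmb_hist ltnn eqxx.
by case: ifP; [left | right].
Qed.

Lemma stale_count_lcmb_lcnb n :
  (stale_count n (lcmb sc k n) <= stale_count n (lcnb sc k n))%N.
Proof. by case: (lcmb_lcnb_or_latest n) => ->; rewrite ?stale_count_latest. Qed.

Lemma stale_count_lcnb_gcnb n :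
  (stale_count n (lcnb sc k n) <= stale_count n (gcnb sc k n))%N.
Proof. by case: (gcnb_lcnb n) => [-> | [_ ->]]; rewrite ?stale_count_latest. Qed.

Lemma UC_count_lcnb_lcmb n :
  (UC_count n (lcnb sc k n) <= UC_count n (lcmb sc k n))%N.
Proof.
case: (lcmb_lcnb_or_latest n) => -> //.
by case: (lcnb_latest_or_committed n) => ->; rewrite ?UC_count_committed.
Qed.

Lemma UC_count_gcnb_lcnb n :
  (UC_count n (gcnb sc k n) <= UC_count n (lcnb sc k n))%N.
Proof. by case: (gcnb_lcnb n) => [-> | [-> _]]; rewrite ?UC_count_committed. Qed.

End Panorama.

Theorem theorem2p12 (N : finType) (R : realFieldType) (sc : scenario N R)
  (k : nat)
  (hread : forall i : nat, (i.+1 < nr sc)%N -> rtime sc i <= rtime sc i.+1) :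
  [/\ staleness sc (lcmb sc k) <= staleness sc (lcnb sc k),
      staleness sc (lcnb sc k) <= staleness sc (gcnb sc k),
      invisibility sc (lcnb sc k) <= invisibility sc (lcmb sc k)
    & invisibility sc (gcnb sc k) <= invisibility sc (lcnb sc k)].
Proof.
split.
- exact: ler_weighted_sum hread (fun n _ => stale_count_lcmb_lcnb sc k n).
- exact: ler_weighted_sum hread (fun n _ => stale_count_lcnb_gcnb sc k n).
- exact: ler_weighted_sum hread (fun n _ => UC_count_lcnb_lcmb sc k n).
- exact: ler_weighted_sum hread (fun n _ => UC_count_gcnb_lcnb sc k n).
Qed.
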